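(* Let $G_1=(V,E_1)$, $G_2=(V,E_2)$ be a duplex network on a finite node set $V$ with driver budgets $k_1,k_2$, and let $(M_1,M_2)\in\mathcal M_1(k_1)\times\mathcal M_2(k_2)$ be a state. Let $\mathcal P$ be a feasible CLAP from $v_0\in\mathrm{DD}_1$ to $v_k\in\mathrm{DD}_2$ in this state. Applying $\mathcal P$ yields a new state $(M_1',M_2')$ satisfying: (i) $|D(M_1')|=k_1$ and $|D(M_2')|=k_2$; (ii) $\Delta(M_1',M_2')=\Delta(M_1,M_2)-2$; (iii) $|U(M_1',M_2')|=|U(M_1,M_2)|-1$.
   Context: For $\ell\in\{1,2\}$, $\mathcal B_\ell$ is the bipartite graph with vertex classes $V^+=\{v^+\}$, $V^-=\{v^-\}$ and an edge $\{u^+,v^-\}$ for each $(u,v)\in E_\ell$. For a matching $M$ in $\mathcal B_\ell$, $D(M)=\{v\in V: v^-\text{ uncovered by }M\}$, and $|D(M)|=|V|-|M|$. $\mathcal M_\ell(k_\ell)$ is the set of matchings in $\mathcal B_\ell$ of size $|V|-k_\ell$. With $D_\ell=D(M_\ell)$: $U(M_1,M_2)=D_1\cup D_2$, $\mathrm{DD}_1=D_1\setminus D_2$, $\mathrm{DD}_2=D_2\setminus D_1$, $\Delta(M_1,M_2)=|\mathrm{DD}_1|+|\mathrm{DD}_2|$. An $M_\ell$-alternating path is a simple path in $\mathcal B_\ell$ whose edges alternate between $M_\ell$ and non-$M_\ell$. An admissible segment $(u\xrightarrow{\ell}v)$ requires an $M_\ell$-alternating witness path between $u^-$ and $v^-$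 and: for $\ell=1$, $u\in D_1$, $v\notin D_1$; for $\ell=2$, $u\notin D_2$, $v\in D_2$. A CLAP is a sequence of admissible segments $v_0\xrightarrow{\ell_1}v_1\cdots\xrightarrow{\ell_k}v_k$, each with a chosen witness path, with $v_0\in\mathrm{DD}_1$, $v_k\in\mathrm{DD}_2$, consecutive layers different ($\ell_{i+1}\ne\ell_i$), and all $v_i$ distinct. It is feasible if, for each layer $\ell$, the witness paths of its layer-$\ell$ segments are pairwise edge-disjoint. Applying $\mathcal P$ means replacing, for each $\ell$, $M_\ell$ by the symmetric difference $M_\ell\triangle\bigcup E(p)$, where the union runs over the edge sets of the witness paths $p$ of all layer-$\ell$ segments of $\mathcal P$. *)

From HB Require Import structures.
From mathcomp Require Import all_boot.
Set Implicit Arguments. Unset Strict Implicit. Unset Printing Implicit Defensive.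

Inductive layer := L1 | L2.
Definition layer_eqb (a b : layer) : bool :=
  match a, b with L1, L1 | L2, L2 => true | _, _ => false end.
Lemma layer_eqP : Equality.axiom layer_eqb.
Proof. by case; case; constructor. Qed.
HB.instance Definition _ := hasDecEq.Build layer layer_eqP.

Section Duplex.
Variable V : finType.

(* A layer G_l = (V, E_l) is given by its set of directed edges E_l : {set V * V}.
   Vertices of the bipartite graph B_l are  V + V : inl v = v^+, inr v = v^-.
   The B_l-edge {u^+, v^-} is represented by the pair (u, v); a set M of such pairs
   is a set of edges of B_l. *)

Definition badj (E : {set V * V}) (x y : V + V) : bool :=
  match x, y with
  | inl u, inr v => (u, v) \in E
  | inr v, inl u => (u, v) \in E
  | _, _ => false
  end.

(* the pair (u,v) naming the B-edge between x and y (meaningful when badj) *)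
Definition bedge (x y : V + V) : V * V :=
  match x, y with
  | inl u, inr v => (u, v)
  | inr v, inl u => (u, v)
  | inl u, inl v => (u, v)
  | inr u, inr v => (u, v)
  end.

Definition path_edges (p : seq (V + V)) : seq (V * V) :=
  if p is x :: s then pairmap bedge x s else [::].
Definition Eset (p : seq (V + V)) : {set V * V} := [set e in path_edges p].

Definition is_matching (E M : {set V * V}) : Prop :=
  [/\ M \subset E,
      {in M &, forall e f : V * V, e.1 = f.1 -> e = f} &
      {in M &, forall e f : V * V, e.2 = f.2 -> e = f}].

Definition D (M : {set V * V}) : {set V} := [set v | [forall e in M, e.2 != v]].

Definition Mk (E : {set V * V}) (k : nat) (M : {set V * V}) : Prop :=
  is_matching E M /\ #|M| + k = #|V|.

Definition U (M1 M2 : {set V * V}) : {set V} := D M1 :|: D M2.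
Definition DD1 (M1 M2 : {set V * V}) : {set V} := D M1 :\: D M2.
Definition DD2 (M1 M2 : {set V * V}) : {set V} := D M2 :\: D M1.
Definition Delta (M1 M2 : {set V * V}) : nat := #|DD1 M1 M2| + #|DD2 M1 M2|.

Definition alt_path (E M : {set V * V}) (a b : V + V) (p : seq (V + V)) : Prop :=
  if p is x :: s then
    [/\ x = a, last x s = b, uniq p, path (badj E) x s &
        sorted (fun e f : V * V => (e \in M) != (f \in M)) (pairmap bedge x s)]
  else False.

Definition sel (A1 A2 : {set V * V}) (l : layer) : {set V * V} :=
  match l with L1 => A1 | L2 => A2 end.

Definition admissible (E1 E2 M1 M2 : {set V * V}) (l : layer) (u v : V)
    (p : seq (V + V)) : Prop :=
  alt_path (sel E1 E2 l) (sel M1 M2 l) (inr u) (inr v) p /\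
  match l with
  | L1 => u \in D M1 /\ v \notin D M1
  | L2 => u \notin D M2 /\ v \in D M2
  end.

(* A segment of a CLAP: (layer l_i, witness path p_i, end vertex v_i).
   A CLAP starting at v0 is given by v0 and the list of its segments; the i-th
   segment (0-based) goes from v_i to v_{i+1}. *)
Definition seg := (layer * seq (V + V) * V)%type.
Definition seg_layer (s : seg) : layer := s.1.1.
Definition seg_path (s : seg) : seq (V + V) := s.1.2.
Definition seg_end (s : seg) : V := s.2.

Definition clap_vertices (v0 : V) (segs : seq seg) : seq V := v0 :: map seg_end segs.

Definition is_CLAP (E1 E2 M1 M2 : {set V * V}) (v0 : V) (segs : seq seg) : Prop :=
  let sd : seg := (L1, [::], v0) in
  let vs := clap_vertices v0 segs in
  [/\ (forall i, i < size segs ->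
         admissible E1 E2 M1 M2 (seg_layer (nth sd segs i)) (nth v0 vs i)
                    (nth v0 vs i.+1) (seg_path (nth sd segs i))),
      (forall i, i.+1 < size segs ->
         seg_layer (nth sd segs i) <> seg_layer (nth sd segs i.+1)),
      uniq vs,
      v0 \in DD1 M1 M2 &
      last v0 (map seg_end segs) \in DD2 M1 M2].

Definition feasible (v0 : V) (segs : seq seg) : Prop :=
  let sd : seg := (L1, [::], v0) in
  forall i j, i < size segs -> j < size segs -> i <> j ->
    seg_layer (nth sd segs i) = seg_layer (nth sd segs j) ->
    [disjoint Eset (seg_path (nth sd segs i)) & Eset (seg_path (nth sd segs j))].

Definition symdiff (A B : {set V * V}) : {set V * V} := (A :\: B) :|: (B :\: A).

Definition apply_layer (M : {set V * V}) (l : layer) (segs : seq seg) : {set V * V} :=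
  symdiff M (\bigcup_(s <- segs | seg_layer s == l) Eset (seg_path s)).

End Duplex.

(* Write [star P x] for the edges of P at the vertex x of the bipartite graph: M is a
   matching iff all its stars have at most one edge, and v is in D(M) iff the star of v^-
   is empty.  The edge set of a simple M-alternating path from a^- to b^- has empty stars
   off the path, a star {e, f} with exactly one edge in M at every inner vertex, and
   one-edge stars at the two ends whose edges differ in M-membership, the path having even
   length.  Hence, if exactly one of a, b lies in D(M), flipping the path gives a matching
   whose D is that of M toggled at a and b; edge- and end-disjoint paths can be flipped one
   after the other.
   In a CLAP v_0 ... v_k the vertex v_i is an end of those of the segments i-1 and i that
   exist, while admissibility puts v_i in exactly one of D(M_1), D(M_2) iff i = 0 or i = k.
   These two parities agree, so after the flips every CLAP vertex lies in both or in neither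
   of D(M_1'), D(M_2') and all other vertices keep their status: DD_1 loses exactly v_0,
   DD_2 loses exactly v_k, and |D(M_l')| = |D(M_l)|. *)

From mathcomp Require Import all_boot zify.
Set Implicit Arguments. Unset Strict Implicit. Unset Printing Implicit Defensive.

Lemma card_toggle_pair (T : finType) (A B : {set T}) (x y : T) :
  (x \in A) != (y \in A) -> (forall v, (v \in B) = (v \in A) (+) (v \in [:: x; y])) ->
  #|B| = #|A|.
Proof.
wlog xA : x y / x \in A => [wlog_xA xy B_eq|xy B_eq].
  case: (boolP (x \in A)) => [xA|xNA]; first exact: (wlog_xA x y).
  have yA : y \in A by move: xy; rewrite (negbTE xNA); case: (y \in A).
  apply: (wlog_xA y x yA); first by rewrite eq_sym.
  by move=> v; rewrite B_eq !inE orbC.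
have yNA : y \notin A by move: xy; rewrite xA; case: (y \in A).
have -> : B = y |: (A :\ x).
  have x_neq_y : x != y by apply: contraNneq yNA => <-.
  apply/setP => v; rewrite B_eq !inE.
  case: (eqVneq v x) => [->|_]; first by rewrite xA (negbTE x_neq_y).
  by case: (eqVneq v y) => [->|_]; rewrite ?(negbTE yNA) ?addbF.
by rewrite cardsU1 (cardsD1 x A) xA !inE (negbTE yNA) andbF.
Qed.

Lemma disjoint_bigcup_seq (I : eqType) (T : finType) (A : {set T}) (J : seq I)
    (F : I -> {set T}) :
  {in J, forall i, [disjoint A & F i]} -> [disjoint A & \bigcup_(i <- J) F i].
Proof.
move=> dAF; rewrite big_seq; elim/big_rec: _ => [|i X iJ dX].
  by rewrite disjoints_subset setC0 subsetT.
by rewrite disjoints_subset setCU subsetI -!disjoints_subset dX dAF.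
Qed.

Lemma count_adjacent n i :
  count (fun j => (j == i) || (j.+1 == i)) (iota 0 n) = (i < n) + (0 < i <= n).
Proof.
elim: n => [|n IH]; first by case: i.
by rewrite -addn1 iotaD count_cat IH /=; lia.
Qed.

Lemma count_filter_layers (T : Type) (f : T -> layer) (a : pred T) s :
  count a [seq j <- s | f j == L1] + count a [seq j <- s | f j == L2] = count a s.
Proof. by elim: s => //= j s <-; case: (f j) => /=; case: (a j) => /=; lia. Qed.

Section Matchings.
Variable V : finType.
Implicit Types (E M P Q S : {set V * V}) (x y z : V + V) (e f : V * V).

Definition incident x e : bool :=
  match x with inl u => e.1 == u | inr v => e.2 == v end.

Definition star P x : {set V * V} := [set e in P | incident x e].

Lemma in_star P x e : (e \in star P x) = (e \in P) && incident x e.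
Proof. by rewrite inE. Qed.

Lemma in_symdiff M P e : (e \in symdiff M P) = (e \in M) (+) (e \in P).
Proof. by rewrite !inE; case: (e \in M); case: (e \in P). Qed.

Lemma symdiff0 M : symdiff M set0 = M.
Proof. by apply/setP => e; rewrite in_symdiff inE addbF. Qed.

Lemma symdiffU M P Q :
  [disjoint P & Q] -> symdiff M (P :|: Q) = symdiff (symdiff M P) Q.
Proof.
move=> dPQ; apply/setP => e; rewrite !in_symdiff inE -addbA.
by case Pe: (e \in P); rewrite ?(disjointFr dPQ Pe).
Qed.

Lemma star_symdiff M P x : star (symdiff M P) x = symdiff (star M x) (star P x).
Proof.
apply/setP => e; rewrite !(inE, in_symdiff).
by case: (incident x e); rewrite ?andbT ?andbF.
Qed.

Lemma matchingP E M :
  is_matching E M <-> M \subset E /\ forall x, #|star M x| <= 1.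
Proof.
split=> [[ME inj1 inj2]|[ME le1]].
  split=> // x; apply/card_le1_eqP => e f; rewrite !inE => /andP[eM xe] /andP[fM xf].
  by case: x xe xf => u /eqP <- /eqP; [apply: inj1 | apply: inj2].
split=> // e f eM fM ef.
  by have /card_le1_eqP := le1 (inl f.1); apply; rewrite !inE ?eM ?fM /= ?ef.
by have /card_le1_eqP := le1 (inr f.2); apply; rewrite !inE ?eM ?fM /= ?ef.
Qed.

Lemma in_D M v : (v \in D M) = (star M (inr v) == set0).
Proof.
rewrite inE; apply/forall_inP/eqP => [Mv|/setP Mv e eM].
  by apply/setP => e; rewrite !inE /=; case eM: (e \in M); rewrite ?(negbTE (Mv _ eM)).
by apply/negP => ev; move: (Mv e); rewrite !inE /= eM ev.
Qed.

Lemma card_D_matching E M : is_matching E M -> #|D M| + #|M| = #|V|.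
Proof.
case=> _ _ inj2.
have -> : D M = ~: [set e.2 | e in M].
  apply/setP => v; rewrite !inE; apply/forall_inP/negP => [Mv /imsetP[e eM ve]|Mv e eM].
    by move: (Mv e eM); rewrite ve eqxx.
  by apply/eqP => ev; apply: Mv; apply/imsetP; exists e.
by rewrite -[#|M|](card_in_imset inj2) addnC cardsC.
Qed.

Lemma symdiff_le1_set2 S e f :
  #|S| <= 1 -> e \in S -> f \notin S -> symdiff S [set e; f] = [set f].
Proof.
move=> /card_le1P le1 eS fS; have Se := le1 e eS.
have ef : f != e by rewrite -[f == e]/(f \in pred1 e) -Se.
apply/setP => g; rewrite in_symdiff Se !inE.
by case: (eqVneq g e) => [->|]; rewrite // eq_sym (negbTE ef).
Qed.

Lemma symdiff_le1_set1 S e :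
  #|S| <= 1 -> (e \in S) = (S != set0) ->
  #|symdiff S [set e]| <= 1 /\ (symdiff S [set e] == set0) = ~~ (S == set0).
Proof.
move=> /card_le1P le1; case: (boolP (e \in S)) => [eS _ | eS /esym/negbFE/eqP S0].
  have -> : symdiff S [set e] = set0.
    by apply/setP => g; rewrite in_symdiff (le1 e eS) !inE addbb.
  by rewrite cards0 eqxx; split=> //; apply/esym/set0Pn; exists e.
rewrite S0; have -> : symdiff set0 [set e] = [set e].
  by apply/setP => g; rewrite in_symdiff !inE.
by rewrite cards1 eqxx; split=> //; apply/set0Pn; exists e; rewrite inE.
Qed.

Definition is_plus x : bool := if x is inl _ then true else false.

Lemma badj_is_plus E y z : badj E y z -> is_plus z = ~~ is_plus y.
Proof. by case: y; case: z. Qed.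

Lemma badj_bedge_in E y z : badj E y z -> bedge y z \in E.
Proof. by case: y => ?; case: z. Qed.

Lemma incident_bedge E x y z :
  badj E y z -> incident x (bedge y z) = (x == y) || (x == z).
Proof.
by case: y => u; case: z => v //= _; case: x => w /=; rewrite ?orbF // eq_sym.
Qed.

End Matchings.

Section AlternatingPath.
Variables (V : finType) (E M : {set V * V}) (a b : V) (p : seq (V + V)).
Hypotheses (altp : alt_path E M (inr a) (inr b) p) (a_neq_b : a != b).

Local Notation n := (size p).-1.
Local Notation q i := (nth (inr a) p i).
Local Notation edge i := (bedge (q i) (q i.+1)).

Lemma size_alt_path : size p = n.+1.
Proof. by case: p altp. Qed.

Lemma alt_path_first : q 0 = inr a.
Proof. by case: p altp => [|x s] // [->]. Qed.

Lemma alt_path_last : q n = inr b.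
Proof. by case: p altp => [|x s] // [_ <-]; rewrite nth_last. Qed.

Lemma alt_path_nth_eq i j : i <= n -> j <= n -> (q i == q j) = (i == j).
Proof.
case: p altp => [|x s] // [_ _ uniq_p _ _] le_i le_j.
by rewrite nth_uniq.
Qed.

Lemma alt_path_adj i : i < n -> badj E (q i) (q i.+1).
Proof. by case: p altp => [|x s] // [_ _ _ /(pathP (inr a)) adj _]; apply: adj. Qed.

Lemma alt_path_alternating i : i.+1 < n -> (edge i \in M) != (edge i.+1 \in M).
Proof.
case: p altp => [|x s] // [_ _ _ _ /(sortedP (bedge x x)) alt] lt_i.
have := alt i; rewrite size_pairmap => /(_ lt_i).
by rewrite !(nth_pairmap (inr a)) // ltnW.
Qed.

Lemma alt_path_edges : path_edges p = [seq edge i | i <- iota 0 n].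
Proof.
case: p altp => [|x s] // _ /=.
apply: (@eq_from_nth _ (bedge x x)); rewrite size_pairmap ?size_map ?size_iota // => i lt_i.
by rewrite (nth_pairmap (inr a)) // (nth_map 0) ?size_iota // nth_iota.
Qed.

Lemma alt_path_EsetP e : reflect (exists2 i, i < n & e = edge i) (e \in Eset p).
Proof.
rewrite inE alt_path_edges.
by apply: (iffP mapP) => -[i]; rewrite ?mem_iota => lt_i ->; exists i; rewrite ?mem_iota.
Qed.

Lemma alt_path_is_plus i : i <= n -> is_plus (q i) = odd i.
Proof.
elim: i => [|i IH] le_i; first by rewrite alt_path_first.
by rewrite (badj_is_plus (alt_path_adj le_i)) IH // ltnW.
Qed.

Lemma alt_path_length_gt0 : 0 < n.
Proof.
rewrite lt0n; apply: contraNneq a_neq_b => n0; apply/eqP.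
by have := alt_path_last; rewrite n0 alt_path_first => -[].
Qed.

Lemma alt_path_edge_parity i : i < n -> (edge i \in M) = (edge 0 \in M) (+) odd i.
Proof.
elim: i => [|i IH] lt_i; first by rewrite addbF.
rewrite /= addbN -IH 1?ltnW //.
by move: (alt_path_alternating lt_i); case: (edge i \in M); case: (edge i.+1 \in M).
Qed.

Lemma alt_path_ends_alternate : (edge 0 \in M) != (edge n.-1 \in M).
Proof.
have odd_n : ~~ odd n by rewrite -alt_path_is_plus // alt_path_last.
have n_eq := prednK alt_path_length_gt0.
rewrite (alt_path_edge_parity (i := n.-1)) ?n_eq //.
by move: odd_n; rewrite -{1}n_eq /= negbK => ->; case: (edge 0 \in M).
Qed.

Lemma alt_path_star j e : j <= n ->
  (e \in star (Eset p) (q j)) = ((j < n) && (e == edge j)) || ((0 < j) && (e == edge j.-1)).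
Proof.
move=> le_j; rewrite inE; apply/andP/idP => [[/alt_path_EsetP [i lt_i ->]]|].
  rewrite (incident_bedge _ (alt_path_adj lt_i)) !alt_path_nth_eq // ?(ltnW lt_i) //.
  by case/orP => /eqP ->; rewrite eqxx ?lt_i //= orbT.
case/orP => /andP [lt_j /eqP ->].
  split; first by apply/alt_path_EsetP; exists j.
  by rewrite (incident_bedge _ (alt_path_adj lt_j)) eqxx.
have lt_j1 : j.-1 < n by rewrite (leq_trans _ le_j) // ltn_predL.
split; first by apply/alt_path_EsetP; exists j.-1.
by rewrite (incident_bedge _ (alt_path_adj lt_j1)) prednK // eqxx orbT.
Qed.

Lemma alt_path_Eset_sub : Eset p \subset E.
Proof.
by apply/subsetP => e /alt_path_EsetP [i lt_i ->]; apply: badj_bedge_in (alt_path_adj lt_i).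
Qed.

Lemma alt_path_star_off x : x \notin p -> star (Eset p) x = set0.
Proof.
move=> xNp; apply/setP => e; rewrite in_set0 inE.
apply/negbTE/negP => /andP [/alt_path_EsetP [i lt_i ->]].
rewrite (incident_bedge _ (alt_path_adj lt_i)) => /orP [] /eqP x_eq; case/negP: xNp;
  by rewrite x_eq mem_nth // size_alt_path ltnS // ltnW.
Qed.

Lemma alt_path_star_inner x : x \in p -> x != inr a -> x != inr b ->
  exists e f, [/\ star (Eset p) x = [set e; f], e \in M & f \notin M].
Proof.
move=> xp xa xb; have x_eq := nth_index (inr a) xp; set j := index x p in x_eq.
have le_j : j <= n by rewrite -ltnS -size_alt_path index_mem.
have lt_j : j < n.
  by rewrite ltn_neqAle le_j andbT; apply: contraNneq xb => j_n; rewrite -x_eq j_n alt_path_last.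
have gt0_j : 0 < j.
  by rewrite lt0n; apply: contraNneq xa => j0; rewrite -x_eq j0 alt_path_first.
set f := bedge (q j.-1) (q j).
have star_j : star (Eset p) x = [set edge j; f].
  by apply/setP => e; rewrite -x_eq alt_path_star // lt_j gt0_j prednK // !inE.
have alt_j : (f \in M) != (edge j \in M).
  by have := alt_path_alternating (i := j.-1); rewrite prednK //; apply.
case: (boolP (edge j \in M)) => ejM.
  by exists (edge j), f; move: alt_j; rewrite star_j ejM; case: (f \in M).
by exists f, (edge j); move: alt_j; rewrite star_j setUC (negbTE ejM); case: (f \in M).
Qed.

Lemma alt_path_star_ends : exists e f,
  [/\ star (Eset p) (inr a) = [set e], star (Eset p) (inr b) = [set f] & (e \in M) != (f \in M)].
Proof.
exists (edge 0), (edge n.-1); split; last exact: alt_path_ends_alternate.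
  by apply/setP => e; rewrite -{1}alt_path_first alt_path_star // alt_path_length_gt0 !inE orbF.
by apply/setP => e; rewrite -alt_path_last alt_path_star // ltnn alt_path_length_gt0 !inE.
Qed.

End AlternatingPath.

Section Flip.
Variable V : finType.
Implicit Types (E M Q : {set V * V}) (x : V + V) (e : V * V).

Lemma alt_path_flip E M a b p :
  is_matching E M -> alt_path E M (inr a) (inr b) p -> (a \in D M) != (b \in D M) ->
  is_matching E (symdiff M (Eset p)) /\
  forall v, (v \in D (symdiff M (Eset p))) = (v \in D M) (+) (v \in [:: a; b]).
Proof.
move=> /matchingP [ME le1] altp Dab.
have a_neq_b : a != b by apply: contraNneq Dab => ->.
have [ea [eb [star_a star_b ea_eb]]] := alt_path_star_ends altp a_neq_b.
have at_end v e : star (Eset p) (inr v) = [set e] -> (e \in star M (inr v)) = (e \in M).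
  move=> sv; have : e \in star (Eset p) (inr v) by rewrite sv set11.
  by rewrite !in_star => /andP [_ ->]; rewrite andbT.
have end_status v e : star (Eset p) (inr v) = [set e] -> (e \in M) ==> (v \notin D M).
  by move=> sv; apply/implyP => eM; rewrite in_D; apply/set0Pn; exists e; rewrite at_end.
have [ea_D eb_D] : (ea \in M) = (a \notin D M) /\ (eb \in M) = (b \notin D M).
  move: (end_status _ _ star_a) (end_status _ _ star_b) ea_eb Dab.
  by case: (ea \in M); case: (eb \in M); case: (a \in D M); case: (b \in D M).
have flip_at x : #|star (symdiff M (Eset p)) x| <= 1 /\
    (star (symdiff M (Eset p)) x == set0) = (star M x == set0) (+) ((x == inr a) || (x == inr b)).
  rewrite star_symdiff.
  case: (eqVneq x (inr a)) => [->|xa].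
    by rewrite star_a /= addbT; apply: symdiff_le1_set1; rewrite // at_end // ea_D in_D.
  case: (eqVneq x (inr b)) => [->|xb].
    by rewrite star_b orbT addbT; apply: symdiff_le1_set1; rewrite // at_end // eb_D in_D.
  rewrite addbF; have [xp|xNp] := boolP (x \in p); last first.
    by rewrite (alt_path_star_off altp) // symdiff0.
  have [e [f [sx eM fM]]] := alt_path_star_inner altp xp xa xb.
  have ex : e \in star M x.
    have : e \in star (Eset p) x by rewrite sx !inE eqxx.
    by rewrite !in_star eM => /andP [_ ->].
  rewrite sx symdiff_le1_set2 ?cards1 //; last by rewrite inE (negbTE fM).
  split=> //; transitivity false; first by apply/negbTE/set0Pn; exists f; rewrite set11.
  by apply/esym/negbTE/set0Pn; exists e.
split.
  apply/matchingP; split=> [|x]; last by case: (flip_at x).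
  apply/subsetP => e; rewrite in_symdiff; case: (boolP (e \in M)) => [/(subsetP ME)//|_ /= eP].
  exact: (subsetP (alt_path_Eset_sub altp)).
by move=> v; rewrite !in_D; case: (flip_at (inr v)) => _ ->; rewrite !inE !(inj_eq inr_inj).
Qed.

Lemma alt_path_symdiff E M Q x y p :
  [disjoint Eset p & Q] -> alt_path E (symdiff M Q) x y p <-> alt_path E M x y p.
Proof.
case: p => [//|z s] dpQ /=.
have same : {in path_edges (z :: s) &, (fun e f => (e \in symdiff M Q) != (f \in symdiff M Q))
                                       =2 (fun e f => (e \in M) != (f \in M))}.
  by move=> e f ep fp; rewrite !in_symdiff !(disjointFr dpQ) ?inE // !addbF.
by rewrite (eq_in_sorted same) ?allss.
Qed.


Lemma alt_paths_flip (I : eqType) E M (J : seq I) (a b : I -> V) (p : I -> seq (V + V)) :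
  is_matching E M -> uniq J ->
  {in J, forall j, alt_path E M (inr (a j)) (inr (b j)) (p j) /\ (a j \in D M) != (b j \in D M)} ->
  {in J &, forall i j, i != j ->
     [disjoint Eset (p i) & Eset (p j)] /\ [disjoint [:: a i; b i] & [:: a j; b j]]} ->
  let M' := symdiff M (\bigcup_(j <- J) Eset (p j)) in
  [/\ is_matching E M', #|D M'| = #|D M| &
      forall v, (v \in D M') = (v \in D M) (+) odd (count (fun j => v \in [:: a j; b j]) J)].
Proof.
elim: J M => [|j J IH] M matM uniqJ altJ disjJ M'.
  by rewrite /M' big_nil symdiff0; split=> // v; rewrite addbF.
case/andP: uniqJ => jNJ uniqJ.
have sub_J : {subset J <= j :: J} by move=> i iJ; rewrite inE iJ orbT.
have disj_j i : i \in J ->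
    [disjoint Eset (p i) & Eset (p j)] /\ [disjoint [:: a i; b i] & [:: a j; b j]].
  move=> iJ; apply: disjJ; [exact: sub_J | exact: mem_head |].
  by apply: contraNneq jNJ => <-.
have [altj Dj] := altJ j (mem_head _ _).
have [matMj DMj] := alt_path_flip matM altj Dj.
set Mj := symdiff M (Eset (p j)) in matMj DMj.
have altJ' : {in J, forall i, alt_path E Mj (inr (a i)) (inr (b i)) (p i) /\
                             (a i \in D Mj) != (b i \in D Mj)}.
  move=> i iJ; have [alti Di] := altJ i (sub_J i iJ); have [dEi dab] := disj_j i iJ.
  have [Dai Dbi] : (a i \in [:: a j; b j]) = false /\ (b i \in [:: a j; b j]) = false.
    by rewrite !(disjointFr dab) // !inE eqxx ?orbT.
  by rewrite !DMj Dai Dbi !addbF; split=> //; apply/alt_path_symdiff.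
have [matM' cardM' DM'] := IH Mj matMj uniqJ altJ' (sub_in2 sub_J disjJ).
rewrite /M' big_cons symdiffU; last first.
  by apply: disjoint_bigcup_seq => i iJ; rewrite disjoint_sym; case: (disj_j i iJ).
split=> //; first by rewrite cardM'; apply: card_toggle_pair Dj DMj.
by move=> v; rewrite DM' DMj /= oddD oddb addbA.
Qed.

End Flip.



Lemma card_U (V : finType) (M1 M2 : {set V * V}) : #|U M1 M2| = #|D M1| + #|DD2 M1 M2|.
Proof.
rewrite /U /DD2 cardsU cardsD setIC.
have : #|D M2 :&: D M1| <= #|D M2| by apply/subset_leq_card/subsetIl.
lia.
Qed.

Lemma in_DD1 (V : finType) (M1 M2 : {set V * V}) v :
  (v \in DD1 M1 M2) = (v \in D M1) && (v \notin D M2).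
Proof. by rewrite in_setD andbC. Qed.

Lemma in_DD2 (V : finType) (M1 M2 : {set V * V}) v :
  (v \in DD2 M1 M2) = (v \in D M2) && (v \notin D M1).
Proof. by rewrite in_setD andbC. Qed.

Section ApplyCLAP.
Variables (V : finType) (E1 E2 M1 M2 : {set V * V}) (v0 : V) (segs : seq (seg V)).
Hypotheses (clap : is_CLAP E1 E2 M1 M2 v0 segs) (feas : feasible v0 segs).

Local Notation k := (size segs).
Local Notation sd := (L1, [::], v0).
Local Notation vs := (clap_vertices v0 segs).
Local Notation vv i := (nth v0 vs i).
Local Notation lay i := (seg_layer (nth sd segs i)).
Local Notation pth i := (seg_path (nth sd segs i)).
Local Notation ends j := [:: vv j; vv j.+1].
Local Notation layer_segs l := [seq j <- index_iota 0 k | lay j == l].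

Lemma clap_admissible i : i < k -> admissible E1 E2 M1 M2 (lay i) (vv i) (vv i.+1) (pth i).
Proof. by case: clap => adm _ _ _ _; apply: adm. Qed.

Lemma clap_layers_alternate i : i.+1 < k -> lay i != lay i.+1.
Proof. by case: clap => _ alt _ _ _ lt_i; apply/eqP/alt. Qed.

Lemma size_clap_vertices : size vs = k.+1.
Proof. by rewrite /= size_map. Qed.

Lemma clap_vertex_eq i j : i <= k -> j <= k -> (vv i == vv j) = (i == j).
Proof.
by case: clap => _ _ uniq_vs _ _ le_i le_j; rewrite nth_uniq // size_clap_vertices.
Qed.

Lemma clap_vertex_mem i : i <= k -> vv i \in vs.
Proof. by move=> le_i; rewrite mem_nth // size_clap_vertices. Qed.

Lemma clap_first : vv 0 \in DD1 M1 M2.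
Proof. by case: clap. Qed.

Lemma clap_last : vv k \in DD2 M1 M2.
Proof.
have -> : vv k = last v0 vs by rewrite -nth_last size_clap_vertices.
by case: clap.
Qed.

Lemma clap_length_gt0 : 0 < k.
Proof.
rewrite lt0n; apply/negP => /eqP k0.
by have := clap_last; rewrite k0 /DD2 inE; case/andP => /negP; case/setDP: clap_first.
Qed.

Lemma clap_layer_flip l : is_matching (sel E1 E2 l) (sel M1 M2 l) ->
  let M' := apply_layer (sel M1 M2 l) l segs in
  [/\ is_matching (sel E1 E2 l) M', #|D M'| = #|D (sel M1 M2 l)| &
      forall v, (v \in D M') =
        (v \in D (sel M1 M2 l)) (+) odd (count (fun j => v \in ends j) (layer_segs l))].
Proof.
move=> matM M'; rewrite {}/M' /apply_layer (big_nth sd) -big_filter.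
apply: alt_paths_flip => //; first by rewrite filter_uniq // iota_uniq.
  move=> j; rewrite mem_filter mem_index_iota => /andP [/eqP lay_j /andP [_ lt_j]].
  have [alt_j ends_j] := clap_admissible lt_j; rewrite lay_j in alt_j ends_j.
  split=> //; case: l {lay_j matM} alt_j ends_j => _ [uD vD].
    by rewrite uD (negbTE vD).
  by rewrite (negbTE uD) vD.
move=> i j; rewrite !mem_filter !mem_index_iota.
move=> /andP [/eqP lay_i /andP [_ lt_i]] /andP [/eqP lay_j /andP [_ lt_j]] ij.
split; first by apply: feas => //; [apply/eqP | rewrite lay_i lay_j].
(* Two segments of the same layer can share an end only if they are consecutive. *)
rewrite !disjoint_cons disjoint_has has_nil andbT !inE.
rewrite !clap_vertex_eq ?eqSS ?(negbTE ij) ?orbF //; try exact: ltnW.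
apply/andP; split; apply/negP => /eqP eq_ij.
  by have := clap_layers_alternate (i := j); rewrite -eq_ij lay_i lay_j eqxx => /(_ lt_i).
by have := clap_layers_alternate (i := i); rewrite eq_ij lay_i lay_j eqxx => /(_ lt_j).
Qed.

Lemma clap_D_xor i : i <= k -> (vv i \in D M1) (+) (vv i \in D M2) = (i == 0) || (i == k).
Proof.
move=> le_i; case: (posnP i) => [-> | gt0_i].
  by case/setDP: clap_first => -> /negbTE ->.
case: (eqVneq i k) => [-> | ne_ik].
  by case/setDP: clap_last => -> /negbTE ->; rewrite orbT.
have lt_i : i < k by rewrite ltn_neqAle ne_ik le_i.
have lt_i1 : i.-1 < k by rewrite (ltn_trans _ lt_i) // ltn_predL.
have := clap_admissible lt_i1; have := clap_admissible lt_i.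
have := clap_layers_alternate (i := i.-1); rewrite !prednK // => /(_ lt_i).
case: (lay i.-1); case: (lay i) => //= _ [_ [uD _]] [_ [_ vD]].
  by rewrite (negbTE uD) (negbTE vD).
by rewrite uD vD.
Qed.

Lemma clap_DD v : v \in vs -> (v \in DD1 M1 M2) = (v == v0) /\ (v \in DD2 M1 M2) = (v == vv k).
Proof.
move=> v_vs; rewrite -(nth_index v0 v_vs).
have := index_mem v vs; rewrite v_vs size_clap_vertices ltnS; move: (index v vs) => i le_i.
have -> : (vv i == v0) = (i == 0) by exact: (clap_vertex_eq le_i (leq0n k)).
rewrite clap_vertex_eq // in_DD1 in_DD2.
case: (posnP i) => [-> | gt0_i].
  by case/setDP: clap_first => -> /negbTE ->; rewrite eq_sym (gtn_eqF clap_length_gt0).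
case: (eqVneq i k) => [-> | ne_ik]; first by case/setDP: clap_last => -> /negbTE ->.
have := clap_D_xor le_i; rewrite (gtn_eqF gt0_i) (negbTE ne_ik).
by case: (vv i \in D M1); case: (vv i \in D M2).
Qed.

Hypotheses (matM1 : is_matching E1 M1) (matM2 : is_matching E2 M2).

Local Notation M1' := (apply_layer M1 L1 segs).
Local Notation M2' := (apply_layer M2 L2 segs).

Lemma clap_apply_D_off v :
  v \notin vs -> (v \in D M1') = (v \in D M1) /\ (v \in D M2') = (v \in D M2).
Proof.
move=> vNvs.
have off l : count (fun j => v \in ends j) (layer_segs l) = 0.
  apply/eqP; rewrite eqn0Ngt -has_count; apply/hasPn => j.
  rewrite mem_filter mem_index_iota => /andP [_ /andP [_ lt_j]]; rewrite !inE.
  by apply/norP; split; apply: contraNneq vNvs => ->; apply: clap_vertex_mem => //; apply: ltnW.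
have [_ _ D1'] := clap_layer_flip (l := L1) matM1.
have [_ _ D2'] := clap_layer_flip (l := L2) matM2.
by rewrite D1' D2' !off !addbF.
Qed.

Lemma clap_apply_D_on v : v \in vs -> (v \in D M1') = (v \in D M2').
Proof.
move=> v_vs; rewrite -(nth_index v0 v_vs).
have := index_mem v vs; rewrite v_vs size_clap_vertices ltnS; move: (index v vs) => i le_i.
have [_ _ D1'] := clap_layer_flip (l := L1) matM1.
have [_ _ D2'] := clap_layer_flip (l := L2) matM2.
apply/eqP; rewrite -negb_add D1' D2' addbACA clap_D_xor // -oddD count_filter_layers.
rewrite (eq_in_count (a2 := fun j => (j == i) || (j.+1 == i))); last first.
  move=> j; rewrite mem_index_iota => /andP [_ lt_j].
  by rewrite !inE !clap_vertex_eq // 1?ltnW // ![i == _]eq_sym.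
rewrite /index_iota subn0 count_adjacent.
have := clap_length_gt0; case: (posnP i) => [-> -> //| gt0_i _].
by case: (eqVneq i k) => [-> | ne_ik]; rewrite ?ltnn ?leqnn // ltn_neqAle ne_ik le_i.
Qed.

Lemma clap_apply_DD1 : DD1 M1' M2' = DD1 M1 M2 :\ v0.
Proof.
apply/setP => v; rewrite in_setD1 in_DD1.
case: (boolP (v \in vs)) => [v_vs | vNvs].
  by rewrite clap_apply_D_on // andbN (proj1 (clap_DD v_vs)) andNb.
have [-> ->] := clap_apply_D_off vNvs; rewrite -in_DD1.
by have -> : v != v0 by apply: contraNneq vNvs => ->; apply: mem_head.
Qed.

Lemma clap_apply_DD2 : DD2 M1' M2' = DD2 M1 M2 :\ vv k.
Proof.
apply/setP => v; rewrite in_setD1 in_DD2.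
case: (boolP (v \in vs)) => [v_vs | vNvs].
  by rewrite clap_apply_D_on // andbN (proj2 (clap_DD v_vs)) andNb.
have [-> ->] := clap_apply_D_off vNvs; rewrite -in_DD2.
by have -> : v != vv k by apply: contraNneq vNvs => ->; apply: clap_vertex_mem.
Qed.

Lemma clap_apply_card_DD1 : #|DD1 M1' M2'| + 1 = #|DD1 M1 M2|.
Proof. by rewrite clap_apply_DD1 (cardsD1 v0 (DD1 M1 M2)) clap_first addnC. Qed.

Lemma clap_apply_card_DD2 : #|DD2 M1' M2'| + 1 = #|DD2 M1 M2|.
Proof. by rewrite clap_apply_DD2 (cardsD1 (vv k) (DD2 M1 M2)) clap_last addnC. Qed.

End ApplyCLAP.

Theorem mainTheorem2 (V : finType) (E1 E2 : {set V * V}) (k1 k2 : nat)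
    (M1 M2 : {set V * V}) (v0 : V) (segs : seq (seg V)) :
  Mk E1 k1 M1 -> Mk E2 k2 M2 ->
  is_CLAP E1 E2 M1 M2 v0 segs -> feasible v0 segs ->
  let M1' := apply_layer M1 L1 segs in
  let M2' := apply_layer M2 L2 segs in
  [/\ is_matching E1 M1' /\ is_matching E2 M2',
      #|D M1'| = k1 /\ #|D M2'| = k2,
      Delta M1' M2' + 2 = Delta M1 M2 &
      #|U M1' M2'| + 1 = #|U M1 M2|].
Proof.
move=> [matM1 sizeM1] [matM2 sizeM2] clap feas M1' M2'.
have [mat1' card1' _] := clap_layer_flip clap feas (l := L1) matM1.
have [mat2' card2' _] := clap_layer_flip clap feas (l := L2) matM2.
rewrite /= in card1' card2'.
have := card_D_matching matM1; have := card_D_matching matM2.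
have := clap_apply_card_DD1 clap feas matM1 matM2.
have := clap_apply_card_DD2 clap feas matM1 matM2.
rewrite /Delta !card_U /M1' /M2' card1' card2'.
by split=> //; lia.
Qed.
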